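(* Let $A$ be an $n\times n$ matrix with a blocking of $n_t$ blocks and largest block size $n_b$, and let $A=LR$ be the block LU factorization produced by the block LU algorithm in which every diagonal block $L_{kk}$ is unitary. (a) If $A$ is nonsingular and diagonally dominant by columns (i.e. $|a_{jj}|\ge\sum_{i\ne j}|a_{ij}|$ for all $j$), then $\|L\|_2\le(n_b^{3/2}+1)n_t$. (b) If $A$ is symmetric positive definite, then $\|L\|_2\le(\kappa_2(A)^{1/2}+1)n_t$.
   Context: Blocking: a strictly increasing list $[1=\mathcal{I}_1<\dots<\mathcal{I}_{n_t+1}=n+1]$ defining blocks $A_{i,j}$ (rows $\mathcal{I}_i:\mathcal{I}_{i+1}-1$, columns $\mathcal{I}_j:\mathcal{I}_{j+1}-1$). Block LU algorithm: $A^{(1)}=A$; for $k=1,\dots,n_t$, factor $A^{(k)}_{kk}=L_{kk}R_{kk}$, set $L_{k+1:n_t,k}=A^{(k)}_{k+1:n_t,k}R_{kk}^{-1}$, $R_{k,k+1:n_t}=L_{kk}^{-1}A^{(k)}_{k,k+1:n_t}$, $A^{(k+1)}=A^{(k)}_{k+1:n_t,k+1:n_t}-L_{k+1:n_t,k}R_{k,k+1:n_t}$. $\|\cdot\|_2$ is the spectral norm and $\kappa_2(A)=\|A\|_2\|A^{-1}\|_2$. *)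

From HB Require Import structures.
From mathcomp Require Import all_boot all_order all_algebra.
From mathcomp Require Import complex.
From mathcomp Require Import boolp classical_sets reals.
Set Implicit Arguments. Unset Strict Implicit. Unset Printing Implicit Defensive.
Import Order.TTheory GRing.Theory Num.Theory.
Local Open Scope ring_scope.
Local Open Scope classical_set_scope.

Definition vnorm2 (R : realType) (n : nat) (x : 'cV[R[i]]_n) : R :=
  Num.sqrt (\sum_(i < n) (@complex.Re R (x i 0) ^+ 2 + @complex.Im R (x i 0) ^+ 2)).

Definition specnorm (R : realType) (m n : nat) (A : 'M[R[i]]_(m, n)) : R :=
  sup [set vnorm2 (A *m x) | x in [set x : 'cV[R[i]]_n | vnorm2 x = 1]].

Definition kappa2 (R : realType) (n : nat) (A : 'M[R[i]]_n) : R :=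
  specnorm A * specnorm (invmx A).

Definition ctrmx (R : realType) (m n : nat) (A : 'M[R[i]]_(m, n)) : 'M[R[i]]_(n, m) :=
  (map_mx (@conjc R) A)^T.

(* Blocking, 0-based: I 0 = 0 < I 1 < ... < I nt = n; block k (0 <= k < nt)
   consists of the indices i with I k <= i < I (k+1).
   (Paper: 1 = I_1 < ... < I_{nt+1} = n+1, block k = I_k .. I_{k+1}-1.) *)
Definition is_blocking (n nt : nat) (I : nat -> nat) : Prop :=
  I 0%N = 0%N /\ I nt = n /\ (forall k, (k < nt)%N -> (I k < I k.+1)%N).

Definition inblk (I : nat -> nat) (k : nat) (n : nat) (i : 'I_n) : bool :=
  (I k <= i < I k.+1)%N.

Definition max_blksize (nt : nat) (I : nat -> nat) : nat :=
  \max_(k < nt) (I k.+1 - I k)%N.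

(* The block LU algorithm (with unitary diagonal blocks L_kk), as a relation
   between the input A, the outputs L, R and the sequence of intermediate
   matrices S k = A^{(k+1)} (stored as full n x n matrices, only the trailing
   part rows/cols >= I k being meaningful).  For k = 0 .. nt-1:
   - A^{(k)}_kk = L_kk R_kk with L_kk unitary;
   - R_kk invertible (inverse M), L_{k+1:nt,k} = A^{(k)}_{k+1:nt,k} R_kk^{-1};
   - R_{k,k+1:nt} = L_kk^{-1} A^{(k)}_{k,k+1:nt}  (L_kk^{-1} is the conjugate transpose of L_kk);
   - A^{(k+1)} = A^{(k)}_{k+1:nt,k+1:nt} - L_{k+1:nt,k} R_{k,k+1:nt};
   - L is block lower triangular and R block upper triangular. *)
Definition block_LU (R : realType) (n nt : nat) (I : nat -> nat)
    (A L U : 'M[R[i]]_n) (S : nat -> 'M[R[i]]_n) : Prop :=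
  S 0%N = A /\
  forall k, (k < nt)%N ->
    (forall i j : 'I_n, inblk I k i -> inblk I k j ->
       S k i j = \sum_(l < n | inblk I k l) L i l * U l j) /\
    (forall i j : 'I_n, inblk I k i -> inblk I k j ->
       \sum_(l < n | inblk I k l) conjc (L l i) * L l j = (i == j)%:R) /\
    (forall i j : 'I_n, inblk I k i -> inblk I k j ->
       \sum_(l < n | inblk I k l) L i l * conjc (L j l) = (i == j)%:R) /\
    (exists M : 'M[R[i]]_n,
       (forall i j : 'I_n, inblk I k i -> inblk I k j ->
          \sum_(l < n | inblk I k l) U i l * M l j = (i == j)%:R) /\
       (forall i j : 'I_n, inblk I k i -> inblk I k j ->
          \sum_(l < n | inblk I k l) M i l * U l j = (i == j)%:R) /\
       (forall i j : 'I_n, (I k.+1 <= i)%N -> inblk I k j ->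
          L i j = \sum_(l < n | inblk I k l) S k i l * M l j)) /\
    (forall i j : 'I_n, inblk I k i -> (I k.+1 <= j)%N ->
       U i j = \sum_(l < n | inblk I k l) conjc (L l i) * S k l j) /\
    (forall i j : 'I_n, (I k.+1 <= i)%N -> (I k.+1 <= j)%N ->
       S k.+1 i j = S k i j - \sum_(l < n | inblk I k l) L i l * U l j) /\
    (forall i j : 'I_n, inblk I k j -> (i < I k)%N -> L i j = 0) /\
    (forall i j : 'I_n, inblk I k i -> (j < I k)%N -> U i j = 0).

Definition col_diag_dominant (R : realType) (n : nat) (A : 'M[R[i]]_n) : Prop :=
  forall j : 'I_n, \sum_(i < n | i != j) `|A i j| <= `|A j j|.

Definition spd (R : realType) (n : nat) (A : 'M[R[i]]_n) : Prop :=
  A^T = A /\ forall x : 'cV[R[i]]_n, x != 0 -> 0 < (ctrmx x *m A *m x) 0 0.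

Arguments block_LU {R n} nt I A L U S.

(* Write [L x] as the sum over the block columns of [L_{:,k} x_k].  As [L] is
   block lower triangular with unitary diagonal blocks,
   [|L_{:,k} x_k|^2 = |x_k|^2 + |L_{k+1:,k} x_k|^2], so a uniform bound
   [|L_{k+1:,k} x_k| <= c |x_k|] yields [|L| <= (1 + c) n_t] by Cauchy-Schwarz
   over the [n_t] blocks.  The bound on [c] comes from
   [L_{k+1:,k} = A^(k)_{k+1:,k} R_kk^-1], which expresses [L_{k+1:,k} x_k]
   through the Schur complement [A^(k)].
   (a) Column diagonal dominance is inherited by Schur complements, and for a
   column dominant matrix whose pivot block is invertible the part of a block
   column below the pivot block is bounded in l1 by the pivot part; comparing
   1- and 2-norms on a block of size at most [n_b] gives [c^2 <= n_b].
   (b) The Schur complements of a positive definite [A] are positive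
   semidefinite, their forms are dominated by that of [A] and realized by it;
   Cauchy-Schwarz for the form of [A^(k)] gives [c^2 <= kappa_2(A)]. *)

From mathcomp Require Import all_boot all_order all_algebra.
From mathcomp Require Import complex.
From mathcomp Require Import boolp classical_sets reals.
From mathcomp Require Import ring lra.
Set Implicit Arguments. Unset Strict Implicit. Unset Printing Implicit Defensive.
Import Order.TTheory GRing.Theory Num.Theory.
Local Open Scope ring_scope.

Section BigSums.
Variables (F : pzSemiRingType) (T : finType).

Lemma sum_mul_deltar (p : pred T) (f : T -> F) l :
  p l -> \sum_(r | p r) f r * (r == l)%:R = f l.
Proof.
move=> pl; rewrite (bigD1 l) //= eqxx mulr1 big1 ?addr0 // => r /andP[_ /negbTE ->].
by rewrite mulr0.
Qed.

Lemma sum_mul_deltal (p : pred T) (f : T -> F) l :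
  p l -> \sum_(r | p r) (l == r)%:R * f r = f l.
Proof.
move=> pl; rewrite (bigD1 l) //= eqxx mul1r big1 ?addr0 // => r /andP[_].
by rewrite eq_sym => /negbTE ->; rewrite mul0r.
Qed.

Lemma sum_mul_sumA (p q : pred T) (a : T -> F) (b : T -> T -> F) (c : T -> F) :
  \sum_(i | p i) a i * (\sum_(j | q j) b i j * c j)
  = \sum_(j | q j) (\sum_(i | p i) a i * b i j) * c j.
Proof.
under eq_bigr do rewrite big_distrr /=.
rewrite exchange_big /=; apply: eq_bigr => j _; rewrite big_distrl /=.
by apply: eq_bigr => i _; rewrite mulrA.
Qed.

End BigSums.

Section SquaredSums.
Variables (F : numDomainType) (T : finType) (p : pred T) (r : T -> F).
Hypothesis r_ge0 : forall i, 0 <= r i.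

Lemma sum_sqr_le_sqr_sum : \sum_(i | p i) r i ^+ 2 <= (\sum_(i | p i) r i) ^+ 2.
Proof.
rewrite expr2 big_distrl /=; apply: ler_sum => i pi.
by rewrite expr2 ler_wpM2l // (bigD1 i) //= lerDl sumr_ge0.
Qed.

(* Expand [0 <= \sum_i \sum_j (r i - r j)^2]. *)
Lemma sqr_sum_le_card_sum_sqr :
  (\sum_(i | p i) r i) ^+ 2 <= #|[pred i | p i]|%:R * \sum_(i | p i) r i ^+ 2.
Proof.
set N := #|[pred i | p i]|%:R.
have cst (x : F) : \sum_(j | p j) x = x *+ #|[pred i | p i]|.
  by rewrite -sumr_const; apply: eq_bigl => j; rewrite inE.
have expand : \sum_(i | p i) \sum_(j | p j) (r i - r j) ^+ 2 =
    (N * \sum_(i | p i) r i ^+ 2) *+ 2 - ((\sum_(i | p i) r i) ^+ 2) *+ 2.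
  have sqrB i j : (r i - r j) ^+ 2 = r i ^+ 2 + r j ^+ 2 - (r i * r j) *+ 2.
    by rewrite sqrrB; ring.
  under eq_bigr do under eq_bigr do rewrite sqrB.
  under eq_bigr do rewrite sumrB big_split /=.
  rewrite sumrB big_split /=.
  have -> : \sum_(i | p i) \sum_(j | p j) r j ^+ 2 = N * \sum_(i | p i) r i ^+ 2.
    by rewrite cst mulr_natl.
  have -> : \sum_(i | p i) \sum_(j | p j) r i ^+ 2 = N * \sum_(i | p i) r i ^+ 2.
    by under eq_bigr do rewrite cst; rewrite sumrMnl mulr_natl.
  rewrite -mulr2n; congr (_ - _).
  rewrite expr2 big_distrl /= -sumrMnl; apply: eq_bigr => i _.
  by rewrite big_distrr /= -sumrMnl.
have : 0 <= (N * \sum_(i | p i) r i ^+ 2) *+ 2 - ((\sum_(i | p i) r i) ^+ 2) *+ 2.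
  rewrite -expand; apply: sumr_ge0 => i _; apply: sumr_ge0 => j _.
  by rewrite -realEsqr realB ?ger0_real.
by rewrite -mulrnBl pmulrn_lge0 // subr_ge0.
Qed.

End SquaredSums.

Lemma sqr_le_mulr_le (F : numDomainType) (a b c : F) :
  0 <= a -> 0 <= b -> 0 <= c -> a ^+ 2 <= a * b * c -> a <= b * c.
Proof.
move=> a0 b0 c0; have [->|an0] := eqVneq a 0; first by rewrite mulr_ge0.
by rewrite expr2 -mulrA ler_pM2l // lt_def an0 a0.
Qed.

Definition pivot_dominant (F : numFieldType) (T : finType) (S : T -> T -> F)
    (P Q : {set T}) :=
  forall j, j \in P ->
    \sum_(i in P | i != j) `|S i j| + \sum_(i in Q) `|S i j| <= `|S j j|.

Definition pivot_injective (F : numFieldType) (T : finType) (S : T -> T -> F)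
    (P : {set T}) :=
  forall u : T -> F, (forall i, i \in P -> \sum_(j in P) S i j * u j = 0) ->
    forall j, j \in P -> u j = 0.

Section PivotElimination.
Variables (F : numFieldType) (T : finType) (S : T -> T -> F) (P Q : {set T}).

Definition schur1 p i j := S i j - S i p * S p j / S p p.

Hypotheses (domS : pivot_dominant S P Q) (injS : pivot_injective S P).
Variables (p : T) (Pp : p \in P).

Lemma sum_pivot_split (f : T -> F) : \sum_(i in P) f i = f p + \sum_(i in P :\ p) f i.
Proof.
by rewrite (bigD1 p) //=; congr (_ + _); apply: eq_bigl => i; rewrite in_setD1 andbC.
Qed.

Lemma pivot_neq0 : S p p != 0.
Proof.
apply/negP => /eqP d0.
pose e := fun j : T => if j == p then (1 : F) else 0.
suff : e p = 0 by rewrite /e eqxx => /eqP; rewrite oner_eq0.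
apply: (injS (u := e) _ Pp) => i Pi.
rewrite (bigD1 p) //= /e eqxx mulr1 big1 ?addr0 => [|j /andP[_ /negbTE ->]]; last first.
  by rewrite mulr0.
case: (eqVneq i p) => [->//|nip].
have := domS Pp; rewrite d0 normr0 (bigD1 i) /=; last by rewrite Pi nip.
move=> H; apply/eqP; rewrite -normr_eq0 eq_le normr_ge0 andbT.
by apply: le_trans H; rewrite -addrA lerDl addr_ge0 ?sumr_ge0.
Qed.

Lemma schur1_dominant : pivot_dominant (schur1 p) (P :\ p) Q.
Proof.
move=> j; rewrite in_setD1 => /andP[njp Pj].
set d := S p p; have nd : 0 < `|d| by rewrite normr_gt0 pivot_neq0.
set A := \sum_(i in P :\ p | i != j) `|S i j| + \sum_(i in Q) `|S i j|.
set B := \sum_(i in P :\ p | i != j) `|S i p| + \sum_(i in Q) `|S i p|.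
have splitP (f : T -> F) k : k \in P :\ p ->
    \sum_(i in P | i != k) f i = f p + \sum_(i in P :\ p | i != k) f i.
  move=> Pk; rewrite (bigD1 p) /=; last by move: Pk; rewrite in_setD1 eq_sym Pp => /andP[].
  congr (_ + _); apply: eq_bigl => i; rewrite in_setD1.
  by case: (i \in P); case: (i != p); case: (_ != _).
have splitPp (f : T -> F) :
    \sum_(i in P | i != p) f i = f j + \sum_(i in P :\ p | i != j) f i.
  rewrite (bigD1 j) /=; last by rewrite Pj.
  congr (_ + _); apply: eq_bigl => i; rewrite in_setD1.
  by case: (i \in P); case: (i != p); case: (_ != _).
have hB : B <= `|d| - `|S j p| by rewrite lerBrDl addrA -splitPp; apply: domS.
have hA : `|S p j| + A <= `|S j j|.
  by rewrite addrA -splitP ?in_setD1 ?njp //; apply: domS.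
have entry i : `|schur1 p i j| <= `|S i j| + `|S i p| * (`|S p j| / `|d|).
  rewrite /schur1 mulrA -normrM -normfV -normrM.
  exact: le_trans (ler_normB _ _) _.
apply: (@le_trans _ _ (A + B * (`|S p j| / `|d|))).
  rewrite /A /B mulrDl !big_distrl /= addrACA -!big_split /=.
  by apply: lerD; apply: ler_sum => i _; apply: entry.
apply: (@le_trans _ _ (`|S j j| - `|S j p * S p j / d|)); last exact: lerB_dist.
apply: (@le_trans _ _ (A + (`|d| - `|S j p|) * (`|S p j| / `|d|))).
  by rewrite lerD2l ler_wpM2r ?divr_ge0.
rewrite mulrBl mulrCA divff ?normr_eq0 ?pivot_neq0 // mulr1.
by rewrite !normrM normfV mulrA addrA lerD2r addrC.
Qed.

Lemma schur1_injective : pivot_injective (schur1 p) (P :\ p).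
Proof.
move=> u Hu j Pj.
set d := S p p; set X := \sum_(l in P :\ p) S p l * u l.
pose u1 := fun l => if l == p then - X / d else u l.
have Su1 i : \sum_(l in P) S i l * u1 l = S i p * (- X / d) + \sum_(l in P :\ p) S i l * u l.
  rewrite sum_pivot_split /u1 eqxx; congr (_ + _); apply: eq_bigr => l.
  by rewrite in_setD1 => /andP[/negbTE -> _].
move: (Pj); rewrite in_setD1 => /andP[njp Pj'].
have := injS (u := u1) _ Pj'; rewrite /u1 (negbTE njp); apply=> i Pi; rewrite Su1.
case: (eqVneq i p) => [->|nip]; first by rewrite -/d -/X mulrC divfK ?pivot_neq0 // addNr.
rewrite -[RHS](Hu i); last by rewrite in_setD1 nip.
rewrite /schur1 /X; under [in RHS]eq_bigr do rewrite mulrBl.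
rewrite sumrB addrC mulNr mulrN mulr_suml mulr_sumr; congr (_ - _).
by apply: eq_bigr => l _; ring.
Qed.

Lemma schur1_l1_step (u : T -> F) :
  \sum_(i in Q) `|\sum_(j in P :\ p) schur1 p i j * u j|
    <= \sum_(i in P :\ p) `|\sum_(j in P :\ p) schur1 p i j * u j| ->
  \sum_(i in Q) `|\sum_(j in P) S i j * u j|
    <= \sum_(i in P) `|\sum_(j in P) S i j * u j|.
Proof.
move=> IH; set d := S p p; have dn0 : d != 0 by apply: pivot_neq0.
set w := fun i => \sum_(j in P :\ p) schur1 p i j * u j.
set t := (\sum_(j in P) S p j * u j) / d.
have Sw i : \sum_(j in P) S i j * u j = S i p * t + w i.
  rewrite /w /schur1 /t sum_pivot_split.
  under [X in _ = _ + X]eq_bigr do rewrite mulrBl.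
  rewrite sumrB sum_pivot_split.
  have -> : \sum_(j in P :\ p) S i p * S p j / S p p * u j =
            S i p / d * \sum_(j in P :\ p) S p j * u j.
    by rewrite mulr_sumr; apply: eq_bigr => l _; ring.
  by rewrite -/d; field.
under eq_bigr do rewrite Sw.
under [in X in _ <= X]eq_bigr do rewrite Sw.
rewrite sum_pivot_split -Sw.
have -> : \sum_(j in P) S p j * u j = d * t by rewrite /t mulrC divfK.
apply: (@le_trans _ _ (`|t| * \sum_(i in Q) `|S i p| + \sum_(i in Q) `|w i|)).
  rewrite mulr_sumr -big_split /=; apply: ler_sum => i _.
  by apply: le_trans (ler_normD _ _) _; rewrite normrM mulrC.
apply: (@le_trans _ _ (`|t| * (`|d| - \sum_(i in P :\ p) `|S i p|) + \sum_(i in P :\ p) `|w i|)).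
  apply: lerD => //; apply: ler_wpM2l => //.
  rewrite lerBrDl; have := domS Pp.
  by rewrite (eq_bigl (fun i => i \in P :\ p)) // => i; rewrite in_setD1 andbC.
rewrite (normrM d t) mulrBr (mulrC `|t| `|d|) -addrA lerD2l.
rewrite mulr_sumr -sumrN -big_split; apply: ler_sum => i _ /=.
rewrite addrC lerBlDr.
have := ler_normB (S i p * t + w i) (S i p * t).
by rewrite addrAC subrr add0r (normrM (S i p)) (mulrC `|S i p|).
Qed.

End PivotElimination.

Lemma dominant_block_l1_le (F : numFieldType) (T : finType) (S : T -> T -> F)
    (P Q : {set T}) :
  pivot_dominant S P Q -> pivot_injective S P ->
  forall u : T -> F, \sum_(i in Q) `|\sum_(j in P) S i j * u j|
                      <= \sum_(i in P) `|\sum_(j in P) S i j * u j|.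
Proof.
have [m] : exists m, #|P| = m by eexists.
elim: m S P => [|m IH] S P cardP domS injS u.
  have -> : P = finset.set0 by apply/eqP; rewrite -cards_eq0 cardP.
  by rewrite big1 ?sumr_ge0 // => i _; rewrite big_set0 normr0.
have [p Pp] : exists p, p \in P by apply/set0Pn; rewrite -card_gt0 cardP.
apply: (schur1_l1_step domS injS Pp); apply: IH.
- by move: cardP; rewrite (cardsD1 p) Pp add1n => -[].
- exact: (schur1_dominant domS injS Pp).
- exact: (schur1_injective domS injS Pp).
Qed.

Lemma ge0_complexE (R : rcfType) (a : R[i]) : 0 <= a -> a = ((complex.Re a)%:C)%C.
Proof. by move=> a0; rewrite RRe_real // ger0_real. Qed.

Section PsdSesquilinear.
Local Open Scope complex_scope.
Variables (R : realType) (T : Type) (f : T -> T -> R[i]) (x y : T) (g : R[i] -> T).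
Local Notation C := R[i].

(* [g t] plays the role of [x + t y]. *)
Hypothesis f_expand : forall t,
  f (g t) (g t) = f x x + t * f x y + t^* * f y x + t * t^* * f y y.
Hypothesis f_psd : forall t, 0 <= f (g t) (g t).
Hypothesis fyy_ge0 : 0 <= f y y.

Lemma psd_fxx_ge0 : 0 <= f x x.
Proof. by have := f_psd 0; rewrite f_expand !mul0r rmorph0 !mul0r !addr0. Qed.

(* Test the form at [t = 1] and [t = 'i]. *)
Lemma psd_form_herm : f y x = (f x y)^*.
Proof.
have r1 := f_psd 1; rewrite f_expand rmorph1 !mul1r in r1.
have r2 := f_psd 'i; rewrite f_expand in r2.
have ii : 'i * 'i^* = 1 :> C by rewrite /= /conjc; simpc.
rewrite ii mul1r in r2.
move: r1 r2; rewrite (ge0_complexE psd_fxx_ge0) (ge0_complexE fyy_ge0).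
case: (f x y) => a1 a2; case: (f y x) => b1 b2.
rewrite !lecE /=; simpc => /andP[/eqP h1 _] /andP[/eqP h2 _].
rewrite /conjc; apply/eqP; rewrite eq_complex /=; apply/andP; split; apply/eqP.
  by move: h2; lra.
by move: h1; lra.
Qed.

(* The real quadratic [F - 2 s m + s^2 m G] in [s], obtained at [t = - s (f x y)^*],
   is nonnegative; its minimum gives [m <= F G]. *)
Lemma psd_form_cauchy_schwarz : `|f x y| ^+ 2 <= f x x * f y y.
Proof.
have Fge0 := psd_fxx_ge0.
have hyx := psd_form_herm.
set F := complex.Re (f x x); set G := complex.Re (f y y).
set m := complex.Re (f x y) ^+ 2 + complex.Im (f x y) ^+ 2.
have quad s : 0 <= F - 2 * s * m + s ^+ 2 * m * G.
  have := f_psd (- (s%:C) * (f x y)^*); rewrite f_expand hyx.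
  rewrite (ge0_complexE Fge0) (ge0_complexE fyy_ge0) /F /G /m.
  case: (f x y) => a1 a2 /=.
  rewrite /conjc /= lecE /=; simpc => /andP[_ H].
  by move: H; nra.
rewrite (ge0_complexE Fge0) (ge0_complexE fyy_ge0) -add_Re2_Im2 -rmorphM lecR -/F -/G -/m.
have G0 : 0 <= G by rewrite -ler0c -ge0_complexE.
have [G00|Gn0] := eqVneq G 0.
  rewrite G00 mulr0; have [->//|mn0] := eqVneq m 0.
  have := quad ((F + 1) / (2 * m)).
  have -> : F - 2 * ((F + 1) / (2 * m)) * m + ((F + 1) / (2 * m)) ^+ 2 * m * G = -1.
    by rewrite G00; field.
  by rewrite oppr_ge0 ler10.
have Gp : 0 < G by rewrite lt_def Gn0 G0.
have := quad G^-1.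
have -> : F - 2 * G^-1 * m + G^-1 ^+ 2 * m * G = (F * G - m) * G^-1 by field.
by rewrite pmulr_lge0 ?invr_gt0 // subr_ge0.
Qed.

End PsdSesquilinear.

Section Vectors.
Local Open Scope complex_scope.
Variables (R : realType) (n : nat).
Local Notation C := R[i].
Implicit Types (p : pred 'I_n) (u v x y : 'I_n -> C) (M H : 'M[C]_n).

(* Vectors are functions ['I_n -> C]; [sqnorm p v] is the squared 2-norm of
   the restriction of [v] to the index set [p]. *)
Definition sqnorm p v := \sum_(i | p i) `|v i| ^+ 2.
Definition mulmxv M x := fun i => \sum_j M i j * x j.
Definition qform H x y := \sum_i \sum_j (x i)^* * H i j * y j.
Definition dotp x y := \sum_i (x i)^* * y i.
Definition lincomb x y (t : C) := fun i => x i + t * y i.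

Lemma sqnorm_ge0 p v : 0 <= sqnorm p v.
Proof. by apply: sumr_ge0 => i _; rewrite exprn_ge0. Qed.

Lemma sqnorm_supp p v : (forall i, ~~ p i -> v i = 0) -> sqnorm predT v = sqnorm p v.
Proof.
move=> v0; rewrite /sqnorm (bigID p) /= [X in _ + X]big1 ?addr0 // => i /v0 ->.
by rewrite normr0 expr0n.
Qed.

Lemma sqnormZ (c : C) v : sqnorm predT (fun i => c * v i) = `|c| ^+ 2 * sqnorm predT v.
Proof. by rewrite /sqnorm mulr_sumr; apply: eq_bigr => i _; rewrite normrM exprMn. Qed.

Lemma sqnorm_eq0 v : sqnorm predT v = 0 -> forall j, v j = 0.
Proof.
move=> v0 j; have := psumr_eq0P (fun i _ => exprn_ge0 2 (normr_ge0 (v i))) v0 (erefl : predT j).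
by move/eqP; rewrite expf_eq0 /= normr_eq0 => /eqP.
Qed.

Lemma sum_mul_supp p (f u : 'I_n -> C) : (forall j, ~~ p j -> u j = 0) ->
  \sum_j f j * u j = \sum_(j | p j) f j * u j.
Proof.
move=> u0; rewrite (bigID p) /= [X in _ + X]big1 ?addr0 // => j /u0 ->.
by rewrite mulr0.
Qed.

Lemma sum_conj_mul_supp p (f u : 'I_n -> C) : (forall j, ~~ p j -> u j = 0) ->
  \sum_j (u j)^* * f j = \sum_(j | p j) (u j)^* * f j.
Proof.
move=> u0; rewrite (bigID p) /= [X in _ + X]big1 ?addr0 // => j /u0 ->.
by rewrite rmorph0 mul0r.
Qed.

Lemma qform_lincomb H x y t : qform H (lincomb x y t) (lincomb x y t) =
  qform H x x + t * qform H x y + t^* * qform H y x + t * t^* * qform H y y.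
Proof.
rewrite /qform /lincomb !mulr_sumr -!big_split /=; apply: eq_bigr => i _.
rewrite !mulr_sumr -!big_split /=; apply: eq_bigr => j _.
by rewrite !rmorphD !rmorphM /=; ring.
Qed.

Lemma dotp_lincomb x y t : dotp (lincomb x y t) (lincomb x y t) =
  dotp x x + t * dotp x y + t^* * dotp y x + t * t^* * dotp y y.
Proof.
rewrite /dotp /lincomb !mulr_sumr -!big_split /=; apply: eq_bigr => i _.
by rewrite !rmorphD !rmorphM /=; ring.
Qed.

Lemma dotpp x : dotp x x = sqnorm predT x.
Proof. by apply: eq_bigr => i _; rewrite sqr_normc mulrC. Qed.

Lemma dotp_cauchy_schwarz x y : `|dotp x y| ^+ 2 <= dotp x x * dotp y y.
Proof.
by apply: (psd_form_cauchy_schwarz (dotp_lincomb x y)) => [t|]; rewrite dotpp sqnorm_ge0.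
Qed.

Lemma qform_mulmxv H x y : qform H x y = dotp x (mulmxv H y).
Proof.
apply: eq_bigr => i _; rewrite mulr_sumr; apply: eq_bigr => j _.
by rewrite mulrA.
Qed.

Lemma mulmxvK M x : M \in unitmx -> mulmxv M (mulmxv (invmx M) x) = x.
Proof.
move=> uM; apply: funext => i; rewrite /mulmxv.
under eq_bigr do rewrite big_distrr /=.
rewrite exchange_big /=.
transitivity (\sum_j (M *m invmx M) i j * x j).
  by apply: eq_bigr => j _; rewrite mxE big_distrl /=; apply: eq_bigr => l _; rewrite mulrA.
rewrite mulmxV // (bigD1 i) //= big1 ?addr0 => [|j /negbTE nji].
  by rewrite mxE eqxx mul1r.
by rewrite mxE eq_sym nji mul0r.
Qed.

Lemma vnorm2_ge0 (x : 'cV[C]_n) : 0 <= vnorm2 x.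
Proof. exact: sqrtr_ge0. Qed.

Lemma vnorm2_sqnorm (x : 'cV[C]_n) : (vnorm2 x ^+ 2)%:C = sqnorm predT (fun i => x i 0).
Proof.
rewrite /vnorm2 sqr_sqrtr; last by apply: sumr_ge0 => i _; rewrite addr_ge0 ?sqr_ge0.
by rewrite rmorph_sum; apply: eq_bigr => i _; rewrite -add_Re2_Im2.
Qed.

Lemma mulmx_mulmxv M (x : 'cV[C]_n) :
  (fun i => (M *m x) i 0) = mulmxv M (fun i => x i 0).
Proof. by apply: funext => i; rewrite mxE. Qed.

Lemma sqnorm_mulmxv_bounded M x : sqnorm predT x <= 1 ->
  sqnorm predT (mulmxv M x) <= \sum_i (\sum_j `|M i j|) ^+ 2.
Proof.
move=> x1; apply: ler_sum => i _; rewrite ler_pXn2r ?nnegrE ?sumr_ge0 //.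
apply: le_trans (ler_norm_sum _ _ _) _; apply: ler_sum => j _.
rewrite normrM ler_piMr //.
have xj1 : `|x j| ^+ 2 <= 1.
  apply: (le_trans _ x1); rewrite /sqnorm (bigD1 j) //= lerDl sumr_ge0 // => l _.
  by rewrite exprn_ge0.
by move: xj1; rewrite -[X in _ <= X](expr1n _ 2) ler_pXn2r ?nnegrE.
Qed.

Lemma specnorm_ub M (x : 'cV[C]_n) : vnorm2 x = 1 -> vnorm2 (M *m x) <= specnorm M.
Proof.
move=> x1; apply: sup_upper_bound; last by exists x.
split; first by exists (vnorm2 (M *m x)), x.
set K := \sum_i (\sum_j `|M i j|) ^+ 2.
exists (1 + complex.Re K) => _ [z z1 <-].
have K0 : 0 <= K by apply: sumr_ge0 => i _; rewrite exprn_ge0 ?sumr_ge0.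
have : (vnorm2 (M *m z) ^+ 2)%:C <= (complex.Re K)%:C.
  rewrite vnorm2_sqnorm mulmx_mulmxv -ge0_complexE //.
  by apply: sqnorm_mulmxv_bounded; rewrite -vnorm2_sqnorm z1 expr1n.
rewrite lecR; have := vnorm2_ge0 (M *m z).
move: (vnorm2 _) (complex.Re K) => v k; nra.
Qed.

Lemma specnorm_ge0 M : 0 <= specnorm M.
Proof.
rewrite /specnorm; set E := [set _ | _ in _]%classic.
have [[y [x x1 _]]|E0] := pselect (E !=set0)%classic.
  exact: le_trans (vnorm2_ge0 (M *m x)) (specnorm_ub M x1).
have -> : E = set0%classic by apply/seteqP; split => y // Ey; apply: E0; exists y.
by rewrite sup0.
Qed.

Lemma specnorm_le M (c : R) : 0 <= c ->
  (forall x : 'cV[C]_n, vnorm2 x = 1 -> vnorm2 (M *m x) <= c) -> specnorm M <= c.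
Proof.
move=> c0 Mc; rewrite /specnorm; set E := [set _ | _ in _]%classic.
have [E0|E0] := pselect (E !=set0)%classic.
  by apply: ge_sup => // y [x x1 <-]; apply: Mc.
have -> : E = set0%classic by apply/seteqP; split => y // Ey; apply: E0; exists y.
by rewrite sup0.
Qed.

(* Apply the definition of [specnorm] to the unit vector [x / |x|]. *)
Lemma sqnorm_mulmxv_le M x :
  sqnorm predT (mulmxv M x) <= ((specnorm M) ^+ 2)%:C * sqnorm predT x.
Proof.
have [N0|Nn0] := eqVneq (sqnorm predT x) 0.
  have x0 := sqnorm_eq0 N0.
  rewrite N0 mulr0 /sqnorm big1 // => i _; rewrite /mulmxv big1 ?normr0 ?expr0n // => j _.
  by rewrite x0 mulr0.
set N := sqnorm predT x in Nn0 *.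
have Np : 0 < N by rewrite lt_def Nn0 sqnorm_ge0.
have NE : N = (complex.Re N)%:C by apply: ge0_complexE; apply: ltW.
have NRp : 0 < complex.Re N by rewrite -ltcR -NE.
set s := Num.sqrt (complex.Re N).
have sp : 0 < s by rewrite sqrtr_gt0.
have s2 : s ^+ 2 = complex.Re N by rewrite sqr_sqrtr // ltW.
set c : C := (s^-1)%:C.
have c2 : `|c| ^+ 2 = ((s ^+ 2)^-1)%:C.
  by rewrite ger0_norm ?ler0c ?invr_ge0 ?ltW // -rmorphXn exprVn.
pose x' : 'cV[C]_n := \col_i (c * x i).
have ex' : (fun i => x' i 0) = (fun i => c * x i) by apply: funext => i; rewrite mxE.
have x'1 : vnorm2 x' = 1.
  have : (vnorm2 x' ^+ 2)%:C = 1 :> C.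
    by rewrite vnorm2_sqnorm ex' sqnormZ c2 -/N NE s2 -rmorphM mulVf // gt_eqF.
  move/(congr1 (@complex.Re R)) => /= h.
  by apply/eqP; rewrite -(@eqrXn2 _ 2) ?vnorm2_ge0 // h expr1n.
have := specnorm_ub M x'1.
rewrite -(@ler_pXn2r _ 2) ?nnegrE ?vnorm2_ge0 ?specnorm_ge0 //.
rewrite -lecR vnorm2_sqnorm mulmx_mulmxv ex'.
have -> : mulmxv M (fun i => c * x i) = (fun i => c * mulmxv M x i).
  by apply: funext => i; rewrite /mulmxv mulr_sumr; apply: eq_bigr => j _; ring.
rewrite sqnormZ c2 => H.
have s20 : 0 <= (s ^+ 2)%:C :> C by rewrite ler0c exprn_ge0 // ltW.
have := ler_wpM2l s20 H; rewrite mulrA -rmorphM mulfV ?gt_eqF ?exprn_gt0 // mul1r.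
by move/le_trans; apply; rewrite mulrC NE s2.
Qed.

Lemma specnorm_le_sqnorm M (c : R) : 0 <= c ->
  (forall x, sqnorm predT (mulmxv M x) <= (c ^+ 2)%:C * sqnorm predT x) ->
  specnorm M <= c.
Proof.
move=> c0 Mc; apply: specnorm_le => // x x1.
have := Mc (fun i => x i 0); rewrite -mulmx_mulmxv -!vnorm2_sqnorm x1 expr1n mulr1 lecR.
by rewrite ler_pXn2r // nnegrE ?vnorm2_ge0.
Qed.

End Vectors.

Section PsdForms.
Local Open Scope complex_scope.
Variables (R : realType) (n : nat) (A : 'M[R[i]]_n).
Local Notation C := R[i].
Hypothesis A_psd : forall z, 0 <= qform A z z.

Lemma psd_form_cs x y : `|qform A x y| ^+ 2 <= qform A x x * qform A y y.
Proof. exact: (psd_form_cauchy_schwarz (qform_lincomb A x y)). Qed.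

Lemma psd_form_le_specnorm v : qform A v v <= (specnorm A)%:C * sqnorm predT v.
Proof.
have q0 := A_psd v; have N0 := sqnorm_ge0 predT v.
rewrite -(@ler_pXn2r _ 2) ?nnegrE ?mulr_ge0 ?ler0c ?specnorm_ge0 //.
rewrite -(ger0_norm q0) qform_mulmxv; apply: le_trans (dotp_cauchy_schwarz _ _) _.
rewrite !dotpp exprMn (expr2 (sqnorm _ v)) mulrCA ler_wpM2l //.
by rewrite -rmorphXn; apply: sqnorm_mulmxv_le.
Qed.

(* With [y = A^-1 x]: [|x|^4 = |(x, A y)|^2 <= (x, A x) (y, A y)] and
   [(y, A y) = (y, x) <= |A^-1| |x|^2]. *)
Lemma sqnorm_le_specnorm_inv_form x : A \in unitmx ->
  sqnorm predT x <= (specnorm (invmx A))%:C * qform A x x.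
Proof.
move=> uA; set s := specnorm (invmx A); set y := mulmxv (invmx A) x.
have Ay : mulmxv A y = x by apply: mulmxvK.
have cs := psd_form_cs x y.
rewrite [qform A x y]qform_mulmxv [qform A y y]qform_mulmxv Ay dotpp in cs.
have N0 := sqnorm_ge0 predT x.
have d0 : 0 <= dotp y x by rewrite -Ay -qform_mulmxv.
have hd : dotp y x <= s%:C * sqnorm predT x.
  rewrite -(@ler_pXn2r _ 2) ?nnegrE ?mulr_ge0 ?ler0c ?specnorm_ge0 //.
  rewrite -(ger0_norm d0); apply: le_trans (dotp_cauchy_schwarz _ _) _.
  rewrite !dotpp exprMn expr2 mulrA ler_wpM2r //.
  by rewrite -rmorphM -expr2; apply: sqnorm_mulmxv_le.
have [->|Nn0] := eqVneq (sqnorm predT x) 0; first by rewrite mulr_ge0 ?ler0c ?specnorm_ge0.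
have Np : 0 < sqnorm predT x by rewrite lt_def Nn0 N0.
rewrite ger0_norm // in cs.
have := le_trans cs (ler_wpM2l (A_psd x) hd).
by rewrite expr2 mulrCA mulrA ler_pM2r // mulrC.
Qed.

End PsdForms.

Section BlockLU.
Local Open Scope complex_scope.
Variables (R : realType) (n nt : nat) (I : nat -> nat).
Variables (A L U : 'M[R[i]]_n) (S : nat -> 'M[R[i]]_n).
Local Notation C := R[i].
Hypothesis blocking : is_blocking n nt I.
Hypothesis LU : block_LU nt I A L U S.
Local Notation inb k := (@inblk I k n).

Lemma blocking_le k : (k < nt)%N -> (I k <= I k.+1)%N.
Proof. by move=> lt_k; case: blocking => _ [_ /(_ k lt_k) /ltnW]. Qed.

Lemma sum_trailing_split k (f : 'I_n -> C) (e : pred 'I_n) : (k < nt)%N ->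
  \sum_(i : 'I_n | (I k <= i)%N && e i) f i =
  \sum_(i : 'I_n | inb k i && e i) f i + \sum_(i : 'I_n | (I k.+1 <= i)%N && e i) f i.
Proof.
move=> lt_k; rewrite (bigID (fun i : 'I_n => (i < I k.+1)%N)) /=; congr (_ + _).
  by apply: eq_bigl => i; rewrite /inblk; case: (I k <= i)%N; case: (e i); case: (i < I k.+1)%N.
apply: eq_bigl => i; rewrite -leqNgt.
case h: (I k.+1 <= i)%N; last by rewrite !andbF.
by rewrite (leq_trans (blocking_le lt_k) h) andbT.
Qed.

Lemma sum_blocks (f : 'I_n -> C) : \sum_(j < n) f j = \sum_(k < nt) \sum_(j : 'I_n | inb k j) f j.
Proof.
case: blocking => I0 [Int lt_I].
have H m : (m <= nt)%N ->
    \sum_(j : 'I_n | (j < I m)%N) f j = \sum_(k < m) \sum_(j : 'I_n | inb k j) f j.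
  elim: m => [|m IH] le_m; first by rewrite big_ord0 big_pred0 // => j; rewrite I0.
  rewrite big_ord_recr /= -IH ?(ltnW le_m) //.
  rewrite (bigID (fun j : 'I_n => (j < I m)%N)) /=; congr (_ + _); apply: eq_bigl => j.
    by case h: (j < I m)%N; rewrite ?andbF ?andbT // (leq_trans h) // ltnW // lt_I.
  by rewrite /inblk -leqNgt andbC.
by rewrite -H //; apply: eq_bigl => j; rewrite Int ltn_ord.
Qed.

Lemma card_block k : (k < nt)%N -> (#|[pred i : 'I_n | inb k i]| <= I k.+1 - I k)%N.
Proof.
move=> lt_k; rewrite cardE -(size_map (@nat_of_ord n)) -(size_iota (I k) (I k.+1 - I k)).
apply: uniq_leq_size; first by rewrite map_inj_uniq ?enum_uniq //; apply: val_inj.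
move=> m; case/seq.mapP => i; rewrite mem_enum inE => /andP[h1 h2] ->.
by rewrite mem_iota h1 subnKC // blocking_le.
Qed.

(* [M] is the inverse of [R_kk]; the first identity also covers the rows of
   block [k] itself, where it reads [L_kk = A^(k)_kk R_kk^-1]. *)
Lemma L_col_from_S k : (k < nt)%N -> exists M : 'M[C]_n,
  forall i l : 'I_n, (I k <= i)%N -> inb k l ->
    L i l = \sum_(m | inb k m) S k i m * M m l.
Proof.
move=> lt_k; have [_ /(_ k lt_k) [LRkk [_ [_ [[M [RM [_ LM]]] _]]]]] := LU.
exists M => i l le_i bl.
have [/LM->//|lt_i] := leqP (I k.+1) i.
have bi : inb k i by rewrite /inblk le_i lt_i.
transitivity (\sum_(m | inb k m) (\sum_(r | inb k r) L i r * U r m) * M m l).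
  rewrite -sum_mul_sumA -(sum_mul_deltar (fun r => L i r) bl).
  by apply: eq_bigr => r br; rewrite RM.
by apply: eq_bigr => m bm; rewrite LRkk.
Qed.

Lemma S_row_from_LU k : (k < nt)%N -> forall i j : 'I_n, inb k i -> (I k.+1 <= j)%N ->
  S k i j = \sum_(l | inb k l) L i l * U l j.
Proof.
move=> lt_k i j bi le_j.
have [_ /(_ k lt_k) [_ [_ [LLc [_ [RU _]]]]]] := LU.
under eq_bigr => l bl do rewrite (RU l j bl le_j).
rewrite sum_mul_sumA -(sum_mul_deltal (fun r => S k r j) bi).
by apply: eq_bigr => r br; rewrite -(LLc i r bi br).
Qed.

Lemma pivot_block_injective k : (k < nt)%N -> forall v : 'I_n -> C,
  (forall i : 'I_n, inb k i -> \sum_(m | inb k m) S k i m * v m = 0) ->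
  forall l : 'I_n, inb k l -> v l = 0.
Proof.
move=> lt_k v Sv l bl.
have [_ /(_ k lt_k) [LRkk [LcL [_ [[M [_ [MR _]]] _]]]]] := LU.
have Rv q : inb k q -> \sum_(m | inb k m) U q m * v m = 0.
  move=> bq; rewrite -(sum_mul_deltal (fun r => \sum_(m | inb k m) U r m * v m) bq).
  under eq_bigr => r br do rewrite -(LcL q r bq br).
  rewrite -sum_mul_sumA big1 // => i bi.
  transitivity ((L i q)^* * \sum_(m | inb k m) S k i m * v m); last by rewrite Sv // mulr0.
  congr (_ * _); rewrite sum_mul_sumA.
  by apply: eq_bigr => m bm; rewrite LRkk.
rewrite -(sum_mul_deltal v bl).
transitivity (\sum_(q | inb k q) M l q * \sum_(m | inb k m) U q m * v m).
  by rewrite sum_mul_sumA; apply: eq_bigr => q bq; rewrite MR.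
by rewrite big1 // => q bq; rewrite Rv // mulr0.
Qed.

Lemma S_next k : (k < nt)%N -> forall i j : 'I_n, (I k.+1 <= i)%N -> (I k.+1 <= j)%N ->
  S k.+1 i j = S k i j - \sum_(l | inb k l) L i l * U l j.
Proof. by move=> lt_k; have [_ /(_ k lt_k) [_ [_ [_ [_ [_ [? _]]]]]]] := LU. Qed.

Definition blkcol k (x : 'I_n -> C) (i : 'I_n) := \sum_(l | inb k l) L i l * x l.

Lemma blkcol_from_S k : (k < nt)%N -> forall x, exists u : 'I_n -> C,
  forall i : 'I_n, (I k <= i)%N -> blkcol k x i = \sum_(m | inb k m) S k i m * u m.
Proof.
move=> lt_k x; have [M LM] := L_col_from_S lt_k.
exists (fun m => \sum_(l | inb k l) M m l * x l) => i le_i.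
by rewrite /blkcol sum_mul_sumA; apply: eq_bigr => l bl; rewrite LM.
Qed.

Lemma sqnorm_blkcol_diag k : (k < nt)%N -> forall x,
  sqnorm (inb k) (blkcol k x) = sqnorm (inb k) x.
Proof.
move=> lt_k x; have [_ /(_ k lt_k) [_ [LcL _]]] := LU.
rewrite /sqnorm /blkcol.
under eq_bigr do rewrite sqr_normc rmorph_sum big_distrl /=.
under eq_bigr do under eq_bigr do rewrite big_distrr /=.
rewrite exchange_big /=; under eq_bigr do rewrite exchange_big /=.
under [RHS]eq_bigr do rewrite sqr_normc.
apply: eq_bigr => l bl.
transitivity (\sum_(m | inb k m) (x l * (x m)^*%C) *
                (\sum_(i | inb k i) (L i l)^*%C * L i m)^*%C).
  apply: eq_bigr => m bm; rewrite rmorph_sum big_distrr /=; apply: eq_bigr => i bi.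
  by rewrite !rmorphM /= conjcK; ring.
under eq_bigr => m bm do rewrite (LcL l m bl bm).
rewrite (bigD1 l) //= eqxx rmorph1 mulr1 big1 ?addr0 // => m /andP[_].
by rewrite eq_sym => /negbTE ->; rewrite rmorph0 mulr0.
Qed.

Lemma sqnorm_blkcol k : (k < nt)%N -> forall x (c2 : C),
  sqnorm (fun i : 'I_n => (I k.+1 <= i)%N) (blkcol k x) <= c2 * sqnorm (inb k) x ->
  sqnorm predT (blkcol k x) <= (1 + c2) * sqnorm (inb k) x.
Proof.
move=> lt_k x c2 sub_c2.
have [_ /(_ k lt_k) [_ [_ [_ [_ [_ [_ [L0 _]]]]]]]] := LU.
have top0 : \sum_(i : 'I_n | (i < I k)%N) `|blkcol k x i| ^+ 2 = 0.
  rewrite big1 // => i lt_i; rewrite /blkcol big1 ?normr0 ?expr0n // => l bl.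
  by rewrite L0 // mul0r.
rewrite /sqnorm (bigID (fun i : 'I_n => (i < I k)%N)) /=.
rewrite (eq_bigl (fun i : 'I_n => (i < I k)%N)) // top0 add0r.
rewrite (eq_bigl (fun i : 'I_n => (I k <= i)%N && predT i)) => [|i]; last by rewrite -leqNgt andbT.
rewrite sum_trailing_split // mulrDl mul1r; apply: lerD.
  rewrite -/(sqnorm (inb k) x) -(sqnorm_blkcol_diag lt_k x) le_eqVlt; apply/orP; left.
  by apply/eqP/eq_bigl => i; rewrite andbT.
apply: le_trans sub_c2; rewrite le_eqVlt; apply/orP; left.
by apply/eqP/eq_bigl => i; rewrite andbT.
Qed.

(* Cauchy-Schwarz over the [nt] block columns gives the factor [nt]. *)
Lemma sqnorm_mulmxv_L_le (c2 : C) : 0 <= c2 ->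
  (forall k, (k < nt)%N -> forall x,
     sqnorm (fun i : 'I_n => (I k.+1 <= i)%N) (blkcol k x) <= c2 * sqnorm (inb k) x) ->
  forall x, sqnorm predT (mulmxv L x) <= nt%:R * (1 + c2) * sqnorm predT x.
Proof.
move=> c20 sub_c2 x; rewrite /sqnorm; under eq_bigr do rewrite /mulmxv sum_blocks.
have cnt : #|[pred k : 'I_nt | predT k]| = nt by rewrite -[RHS]card_ord; apply: eq_card.
apply: (@le_trans _ _ (\sum_(i < n) nt%:R * \sum_(k < nt) `|blkcol k x i| ^+ 2)).
  apply: ler_sum => i _.
  apply: le_trans (_ : (\sum_(k < nt) `|blkcol k x i|) ^+ 2 <= _).
    by rewrite ler_pXn2r ?nnegrE ?sumr_ge0 // ler_norm_sum.
  by have := sqr_sum_le_card_sum_sqr predT (fun k : 'I_nt => normr_ge0 (blkcol k x i));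
    rewrite cnt.
rewrite -mulr_sumr -mulrA ler_wpM2l // exchange_big /= sum_blocks mulr_sumr.
by apply: ler_sum => k _; exact: (sqnorm_blkcol (ltn_ord k) (sub_c2 k (ltn_ord k) x)).
Qed.

Lemma specnorm_L_le (c : R) : 0 <= c ->
  (forall k, (k < nt)%N -> forall x,
     sqnorm (fun i : 'I_n => (I k.+1 <= i)%N) (blkcol k x) <= (c ^+ 2)%:C * sqnorm (inb k) x) ->
  specnorm L <= (1 + c) * nt%:R.
Proof.
move=> c0 sub_c; apply: specnorm_le_sqnorm; first by rewrite mulr_ge0 ?addr_ge0.
move=> x; apply: le_trans (sqnorm_mulmxv_L_le _ sub_c x) _; first by rewrite ler0c sqr_ge0.
apply: ler_wpM2r; first exact: sqnorm_ge0.
rewrite -(rmorph_nat (real_complex R)) -(rmorph1 (real_complex R)) -rmorphD -rmorphM lecR.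
have [->|nt_gt0] := posnP nt; first by rewrite !mul0r mulr0 expr0n.
have t1 : 1 <= nt%:R :> R by rewrite ler1n.
move: (nt%:R : R) t1 => t t1.
have t0 : 0 <= t := le_trans ler01 t1.
have h1 : 0 <= (t - 1) * ((1 + c) ^+ 2 * t).
  by apply: mulr_ge0; [rewrite subr_ge0 | exact: mulr_ge0 (sqr_ge0 _) t0].
have h2 : 0 <= c * t by apply: mulr_ge0.
nra.
Qed.

End BlockLU.

Section DiagonallyDominant.
Variables (R : realType) (n nt : nat) (I : nat -> nat).
Variables (A L U : 'M[R[i]]_n) (S : nat -> 'M[R[i]]_n).
Local Notation C := R[i].
Hypothesis blocking : is_blocking n nt I.
Hypothesis LU : block_LU nt I A L U S.
Local Notation inb k := (@inblk I k n).

Definition trailing_dominant k := forall j : 'I_n, (I k <= j)%N ->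
  \sum_(i : 'I_n | (I k <= i)%N && (i != j)) `|S k i j| <= `|S k j j|.

Lemma trailing_dominant0 : col_diag_dominant A -> trailing_dominant 0.
Proof.
case: blocking => I0 _; case: LU => S0 _ domA j _; rewrite S0 I0.
exact: le_trans (domA j).
Qed.

Let blockset k := [set i : 'I_n | inb k i].
Let tailset k := [set i : 'I_n | (I k.+1 <= i)%N].

Lemma block_pivot_dominant k : (k < nt)%N -> trailing_dominant k ->
  pivot_dominant (S k) (blockset k) (tailset k).
Proof.
move=> lt_k domk j; rewrite inE => bj.
have := domk j (proj1 (andP bj)); rewrite (sum_trailing_split blocking) //.
congr (_ + _ <= _); apply: eq_bigl => i; rewrite !inE //.
case h: (I k.+1 <= i)%N => //=; apply/eqP => eij; move: bj; rewrite /inblk -eij.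
by rewrite ltnNge h andbF.
Qed.

Lemma block_pivot_injective k : (k < nt)%N -> pivot_injective (S k) (blockset k).
Proof.
move=> lt_k u Su j; rewrite inE; apply: (pivot_block_injective LU lt_k) => i bi.
have := Su i; rewrite inE => /(_ bi) Su0; apply: etrans Su0.
by apply: eq_bigl => l; rewrite inE.
Qed.

Lemma tail_l1_le_block_l1 k : (k < nt)%N -> trailing_dominant k -> forall u : 'I_n -> C,
  \sum_(i : 'I_n | (I k.+1 <= i)%N) `|\sum_(m : 'I_n | inb k m) S k i m * u m|
  <= \sum_(i : 'I_n | inb k i) `|\sum_(m : 'I_n | inb k m) S k i m * u m|.
Proof.
move=> lt_k domk u.
have := dominant_block_l1_le (block_pivot_dominant lt_k domk) (block_pivot_injective lt_k) u.
have E (p : pred 'I_n) (f : 'I_n -> C) : \sum_(i in [set i | p i]) f i = \sum_(i | p i) f i.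
  by apply: eq_bigl => i; rewrite inE.
by rewrite !E; under eq_bigr do rewrite E; under [X in _ <= X -> _]eq_bigr do rewrite E.
Qed.

Lemma trailing_dominantS k : (k < nt)%N -> trailing_dominant k -> trailing_dominant k.+1.
Proof.
move=> lt_k domk j le_j.
have [u Lu] := blkcol_from_S LU lt_k (fun l => U l j).
have le_Ik := blocking_le blocking lt_k.
set w := fun i => \sum_(m : 'I_n | inb k m) S k i m * u m.
have {}Lu (i : 'I_n) : (I k <= i)%N -> \sum_(l | inb k l) L i l * U l j = w i := Lu i.
have Sw i : inb k i -> S k i j = w i.
  by move=> bi; rewrite (S_row_from_LU LU lt_k bi le_j) Lu //; case/andP: bi.
have tail_le := tail_l1_le_block_l1 lt_k domk u; rewrite -/w in tail_le.
rewrite (S_next LU) // Lu ?(leq_trans le_Ik) //.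
under eq_bigr => i /andP[le_i _] do rewrite (S_next LU) // Lu ?(leq_trans le_Ik le_i) //.
apply: (@le_trans _ _ (\sum_(i : 'I_n | (I k.+1 <= i)%N && (i != j)) `|S k i j| +
                       (\sum_(i : 'I_n | (I k.+1 <= i)%N) `|w i| - `|w j|))).
  rewrite (bigD1 j (P := fun i : 'I_n => (I k.+1 <= i)%N)) //=.
  rewrite [_ + \sum_(i : 'I_n | _) _]addrC addrK.
  by rewrite -big_split /=; apply: ler_sum => i _; exact: ler_normB.
apply: le_trans (lerB_dist _ _); rewrite addrA lerD2r.
have := domk j (leq_trans le_Ik le_j); rewrite (sum_trailing_split blocking) //.
apply: le_trans; rewrite addrC lerD2r.
have -> : \sum_(i : 'I_n | inb k i && (i != j)) `|S k i j| = \sum_(i : 'I_n | inb k i) `|S k i j|.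
  apply: eq_bigl => i; case bi: (inb k i) => //=; apply/eqP => eij; move: bi.
  by rewrite eij /inblk ltnNge le_j andbF.
by apply: le_trans tail_le _; rewrite le_eqVlt eq_sym; apply/orP; left;
  apply/eqP/eq_bigr => i bi; rewrite Sw.
Qed.

Lemma trailing_dominant_all : col_diag_dominant A -> forall k, (k <= nt)%N -> trailing_dominant k.
Proof.
move=> domA; elim=> [|k IH] le_k; first exact: trailing_dominant0.
exact: trailing_dominantS (IH (ltnW le_k)).
Qed.

(* The l1 bound on the column block, then the comparisons of the 1- and 2-norms
   on a block of at most [n_b] entries. *)
Lemma sqnorm_subcol_dominant k : (k < nt)%N -> trailing_dominant k -> forall x,
  sqnorm (fun i : 'I_n => (I k.+1 <= i)%N) (blkcol I L k x) <=
    #|[pred i : 'I_n | inb k i]|%:R * sqnorm (inb k) x.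
Proof.
move=> lt_k domk x.
have [u Lu] := blkcol_from_S LU lt_k x.
have tail_le := tail_l1_le_block_l1 lt_k domk u.
rewrite -(sqnorm_blkcol_diag LU lt_k x).
apply: (@le_trans _ _ ((\sum_(i : 'I_n | inb k i) `|blkcol I L k x i|) ^+ 2)); last first.
  by apply: sqr_sum_le_card_sum_sqr.
apply: le_trans (sum_sqr_le_sqr_sum _ _) _ => //.
rewrite ler_pXn2r ?nnegrE ?sumr_ge0 //.
apply: le_trans (le_trans tail_le _) => [|]; rewrite le_eqVlt; apply/orP; left;
  apply/eqP/eq_bigr => i.
  by move=> le_i; rewrite Lu // (leq_trans (blocking_le blocking lt_k)).
by case/andP=> le_i _; rewrite Lu.
Qed.

Lemma specnorm_L_dominant : col_diag_dominant A ->
  specnorm L <= (1 + Num.sqrt (max_blksize nt I)%:R) * nt%:R.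
Proof.
move=> domA; apply: (specnorm_L_le blocking LU (sqrtr_ge0 _)) => k lt_k x.
rewrite sqr_sqrtr ?ler0n //.
apply: le_trans (sqnorm_subcol_dominant lt_k (trailing_dominant_all domA (ltnW lt_k)) x) _.
apply: ler_wpM2r; first exact: sqnorm_ge0.
rewrite -(rmorph_nat (real_complex R)) lecR ler_nat.
apply: leq_trans (card_block blocking lt_k) _.
exact: (@leq_bigmax _ (fun k : 'I_nt => I k.+1 - I k)%N (Ordinal lt_k)).
Qed.

End DiagonallyDominant.

Section PositiveDefinite.
Local Open Scope complex_scope.
Variables (R : realType) (n nt : nat) (I : nat -> nat).
Variables (A L U : 'M[R[i]]_n) (S : nat -> 'M[R[i]]_n).
Local Notation C := R[i].
Hypothesis blocking : is_blocking n nt I.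
Hypothesis LU : block_LU nt I A L U S.
Local Notation inb k := (@inblk I k n).

Definition trailing k (z : 'I_n -> C) := forall i : 'I_n, (i < I k)%N -> z i = 0.

Definition schur_psd k :=
  [/\ forall z, trailing k z -> 0 <= qform (S k) z z,
      forall z, trailing k z -> qform (S k) z z <= qform A z z &
      forall z, trailing k z -> exists x, (forall i : 'I_n, (I k <= i)%N -> x i = z i) /\
                                  qform A x x = qform (S k) z z].

Lemma schur_psd0 : (forall z, 0 <= qform A z z) -> schur_psd 0.
Proof. by move=> A_psd; case: LU => S0 _; rewrite /schur_psd S0; split=> // z _; exists z. Qed.

Lemma trailing_lincomb k z u t : trailing k z -> trailing k u -> trailing k (lincomb z u t).
Proof. by move=> z0 u0 i lt_i; rewrite /lincomb z0 // u0 // mulr0 addr0. Qed.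

Lemma trailingS k z : (k < nt)%N -> trailing k.+1 z -> trailing k z.
Proof. by move=> lt_k z0 i lt_i; rewrite z0 // (leq_trans lt_i) // (blocking_le blocking). Qed.

Lemma block_trailing k u : (forall i, ~~ inb k i -> u i = 0) -> trailing k u.
Proof. by move=> u0 i lt_i; rewrite u0 // /inblk leqNgt lt_i. Qed.

Section Invariant.
Variables (k : nat) (lt_k : (k < nt)%N) (Hk : schur_psd k).

Lemma schur_psd_herm z u : trailing k z -> trailing k u ->
  qform (S k) u z = (qform (S k) z u)^*.
Proof.
case: Hk => S_psd _ _ z0 u0; apply: (psd_form_herm (qform_lincomb (S k) z u)) => [t|].
  by apply: S_psd; apply: trailing_lincomb.
exact: S_psd.
Qed.

Lemma schur_psd_cs z u : trailing k z -> trailing k u ->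
  `|qform (S k) z u| ^+ 2 <= qform (S k) z z * qform (S k) u u.
Proof.
case: Hk => S_psd _ _ z0 u0; apply: (psd_form_cauchy_schwarz (qform_lincomb (S k) z u)).
  by move=> t; apply: S_psd; apply: trailing_lincomb.
exact: S_psd.
Qed.

(* One step of block elimination: [u = R_kk^-1 R_{k,:} z] cancels [A^(k) z] on
   block [k], and [A^(k) (z - u)] equals [A^(k+1) z] below it. *)
Lemma block_elimination z : trailing k.+1 z -> exists u,
  [/\ forall i, ~~ inb k i -> u i = 0,
      forall i, inb k i -> mulmxv (S k) (lincomb z u (-1)) i = 0 &
      forall i : 'I_n, (I k.+1 <= i)%N ->
        mulmxv (S k.+1) z i = mulmxv (S k) (lincomb z u (-1)) i].
Proof.
move=> z0; have [M LM] := L_col_from_S LU lt_k.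
set y := fun l => \sum_j U l j * z j.
pose u := fun m => if inb k m then \sum_(l | inb k l) M m l * y l else 0.
have u0 i : ~~ inb k i -> u i = 0 by move=> /negbTE bi; rewrite /u bi.
have Su (i : 'I_n) : (I k <= i)%N -> mulmxv (S k) u i = \sum_(l | inb k l) L i l * y l.
  move=> le_i; rewrite /mulmxv (sum_mul_supp _ u0).
  under eq_bigr => m bm do rewrite /u bm.
  by rewrite sum_mul_sumA; apply: eq_bigr => l bl; rewrite LM.
have Sz_u i : mulmxv (S k) (lincomb z u (-1)) i = mulmxv (S k) z i - mulmxv (S k) u i.
  rewrite /mulmxv -sumrB; apply: eq_bigr => j _; rewrite /lincomb; ring.
exists u; split=> // i.
  move=> bi; rewrite Sz_u Su; last by case/andP: bi.
  apply/eqP; rewrite subr_eq0; apply/eqP.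
  rewrite /y /mulmxv (@sum_mul_sumA _ _ _ predT); apply: eq_bigr => j _.
  have [le_j|lt_j] := leqP (I k.+1) j; first by rewrite (S_row_from_LU LU lt_k bi le_j).
  by rewrite z0 // !mulr0.
move=> le_i; rewrite Sz_u Su ?(leq_trans (blocking_le blocking lt_k)) //.
rewrite /y /mulmxv (@sum_mul_sumA _ _ _ predT) -sumrB; apply: eq_bigr => j _.
have [le_j|lt_j] := leqP (I k.+1) j; first by rewrite (S_next LU) // mulrBl.
by rewrite z0 // !mulr0 subr0.
Qed.

(* With [w = z - u]: [(u, A^(k) w) = 0] since [u] lives in block [k], so
   [(w, A^(k) w) = (z, A^(k) z) - (u, A^(k) u)]. *)
Lemma schur_form_step z : trailing k.+1 z -> exists u,
  [/\ forall i, ~~ inb k i -> u i = 0,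
      qform (S k.+1) z z = qform (S k) (lincomb z u (-1)) (lincomb z u (-1)) &
      qform (S k.+1) z z <= qform (S k) z z].
Proof.
move=> z0; have [u [u0 Sw0 Sw]] := block_elimination z0.
set w := lincomb z u (-1).
have zk := trailingS lt_k z0; have uk := block_trailing u0.
have wk : trailing k w by apply: trailing_lincomb.
have z0' (i : 'I_n) : ~~ (I k.+1 <= i)%N -> z i = 0 by rewrite -ltnNge; apply: z0.
have uw0 : qform (S k) u w = 0.
  rewrite qform_mulmxv /dotp (sum_conj_mul_supp _ u0) big1 // => i bi.
  by rewrite Sw0 // mulr0.
have eq_zw : qform (S k.+1) z z = qform (S k) w w.
  rewrite !qform_mulmxv /dotp (sum_conj_mul_supp _ z0').
  rewrite [RHS](bigID (fun i : 'I_n => (I k.+1 <= i)%N)) /= [X in _ = _ + X]big1 ?addr0.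
    by apply: eq_bigr => i le_i; rewrite Sw // /w /lincomb u0 ?mulr0 ?addr0 //
      /inblk negb_and -leqNgt le_i orbT.
  move=> i lt_i; rewrite -ltnNge in lt_i.
  have [le_i|lt_Ik] := leqP (I k) i; first by rewrite Sw0 ?mulr0 // /inblk le_i.
  by rewrite wk // rmorph0 mul0r.
have wu0 : qform (S k) w u = 0 by rewrite (schur_psd_herm uk wk) uw0 rmorph0.
have ww : qform (S k) w w = qform (S k) z z - qform (S k) u u.
  have lin1 x : qform (S k) x w = qform (S k) x z - qform (S k) x u.
    by rewrite !qform_mulmxv /dotp -sumrB; apply: eq_bigr => i _;
      rewrite /mulmxv /w /lincomb -mulrBr -sumrB; congr (_ * _); apply: eq_bigr => j _; ring.
  have lin2 x : qform (S k) w x = qform (S k) z x - qform (S k) u x.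
    rewrite /qform -sumrB; apply: eq_bigr => i _; rewrite -sumrB; apply: eq_bigr => j _.
    by rewrite /w /lincomb rmorphD rmorphM rmorphN rmorph1; ring.
  have zu_uu : qform (S k) z u = qform (S k) u u.
    by apply/eqP; rewrite -subr_eq0 -lin2 wu0.
  by rewrite lin2 uw0 subr0 lin1 zu_uu.
exists u; split=> //; rewrite eq_zw ww lerBlDr lerDl.
by case: Hk => S_psd _ _; apply: S_psd.
Qed.

Lemma schur_psdS : schur_psd k.+1.
Proof.
case: Hk => S_psd S_leA S_ext.
have w_trailing z u : trailing k.+1 z -> (forall i, ~~ inb k i -> u i = 0) ->
    trailing k (lincomb z u (-1)).
  by move=> z0 u0; apply: trailing_lincomb; [apply: trailingS | apply: block_trailing].
split=> z z0; have [u [u0 eq_zw le_zz]] := schur_form_step z0.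
- by rewrite eq_zw; apply: S_psd; apply: w_trailing.
- by apply: le_trans le_zz _; apply: S_leA; apply: trailingS.
have [x [xw Ax]] := S_ext _ (w_trailing z u z0 u0).
exists x; split; last by rewrite Ax eq_zw.
move=> i le_i; rewrite xw ?(leq_trans (blocking_le blocking lt_k)) // /lincomb u0 ?mulr0 ?addr0 //.
by rewrite /inblk negb_and -leqNgt le_i orbT.
Qed.

End Invariant.
End PositiveDefinite.

Section PositiveDefiniteBound.
Local Open Scope complex_scope.
Variables (R : realType) (n nt : nat) (I : nat -> nat).
Variables (A L U : 'M[R[i]]_n) (S : nat -> 'M[R[i]]_n).
Local Notation C := R[i].
Hypothesis blocking : is_blocking n nt I.
Hypothesis LU : block_LU nt I A L U S.
Local Notation inb k := (@inblk I k n).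
Hypotheses (A_psd : forall z, 0 <= qform A z z) (A_unit : A \in unitmx).

Lemma schur_psd_all k : (k <= nt)%N -> schur_psd I A S k.
Proof.
elim: k => [|k IH] le_k; first exact: (schur_psd0 LU A_psd).
exact: (schur_psdS blocking LU le_k (IH (ltnW le_k))).
Qed.

Section Block.
Variables (k : nat) (lt_k : (k < nt)%N).
Let Hk := schur_psd_all (ltnW lt_k).

(* For [u] in block [k]: [(u, A^(k) u)^2 <= |u|^2 |A^(k) u|_k^2] and
   [|u|^2 <= |A^-1| (u, A^(k) u)], the latter through the realization by [A]. *)
Lemma schur_form_le_block u : (forall i, ~~ inb k i -> u i = 0) ->
  qform (S k) u u <= (specnorm (invmx A))%:C * sqnorm (inb k) (mulmxv (S k) u).
Proof.
case: Hk => S_psd _ S_ext u0; set s := specnorm (invmx A).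
have uk := block_trailing u0.
set w := fun i => if inb k i then mulmxv (S k) u i else 0.
have w0 i : ~~ inb k i -> w i = 0 by move=> /negbTE bi; rewrite /w bi.
have uw : qform (S k) u u = dotp u w.
  rewrite qform_mulmxv /dotp (sum_conj_mul_supp _ u0) [RHS](sum_conj_mul_supp _ u0).
  by apply: eq_bigr => i bi; rewrite /w bi.
have sqw : sqnorm predT w = sqnorm (inb k) (mulmxv (S k) u).
  by rewrite (sqnorm_supp w0); apply: eq_bigr => i bi; rewrite /w bi.
have q0 := S_psd u uk.
have u_le : sqnorm predT u <= s%:C * qform (S k) u u.
  have [x [xu Ax]] := S_ext u uk.
  rewrite -Ax; apply: le_trans (sqnorm_le_specnorm_inv_form A_psd x A_unit).
  have u0' (i : 'I_n) : ~~ (I k <= i)%N -> u i = 0 by rewrite -ltnNge; apply: uk.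
  rewrite (sqnorm_supp u0') /sqnorm [X in _ <= X](bigID (fun i : 'I_n => (I k <= i)%N)) /=.
  rewrite -[X in X <= _]addr0 lerD ?sumr_ge0 // => [|i _]; last by rewrite exprn_ge0.
  by rewrite le_eqVlt; apply/orP; left; apply/eqP/eq_bigr => i le_i; rewrite xu.
rewrite -sqw; apply: sqr_le_mulr_le; rewrite ?ler0c ?specnorm_ge0 ?sqnorm_ge0 //.
rewrite -(ger0_norm q0) uw; apply: le_trans (dotp_cauchy_schwarz _ _) _.
by rewrite -uw (ger0_norm q0) !dotpp ler_wpM2r ?sqnorm_ge0 // mulrC.
Qed.

(* With [u = R_kk^-1 x_k] and [v] the part of [L_{:,k} x_k] below block [k]:
   [|v|^2 = (v, A^(k) u)], and Cauchy-Schwarz for [A^(k)] gives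
   [|v|^4 <= (v, A^(k) v) (u, A^(k) u) <= |A| |v|^2 |A^-1| |x_k|^2]. *)
Lemma sqnorm_subcol_spd x :
  sqnorm (fun i : 'I_n => (I k.+1 <= i)%N) (blkcol I L k x) <=
    (specnorm A * specnorm (invmx A))%:C * sqnorm (inb k) x.
Proof.
case: Hk => S_psd S_leA _.
have [M LM] := L_col_from_S LU lt_k.
have le_Ik := blocking_le blocking lt_k.
set V := sqnorm _ (blkcol I L k x).
pose u := fun m => if inb k m then \sum_(l | inb k l) M m l * x l else 0.
have u0 i : ~~ inb k i -> u i = 0 by move=> /negbTE bi; rewrite /u bi.
have Su (i : 'I_n) : (I k <= i)%N -> mulmxv (S k) u i = blkcol I L k x i.
  move=> le_i; rewrite /mulmxv (sum_mul_supp _ u0).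
  under eq_bigr => m bm do rewrite /u bm.
  by rewrite sum_mul_sumA /blkcol; apply: eq_bigr => l bl; rewrite LM.
pose v := fun i : 'I_n => if (I k.+1 <= i)%N then blkcol I L k x i else 0.
have v0 (i : 'I_n) : ~~ (I k.+1 <= i)%N -> v i = 0 by move=> /negbTE le_i; rewrite /v le_i.
have vk : trailing I k v.
  by move=> i lt_i; apply: v0; rewrite -ltnNge (leq_trans lt_i).
have vv : sqnorm predT v = V by rewrite (sqnorm_supp v0); apply: eq_bigr => i le_i; rewrite /v le_i.
have vu : qform (S k) v u = V.
  rewrite qform_mulmxv /dotp (sum_conj_mul_supp _ v0); apply: eq_bigr => i le_i.
  by rewrite /v le_i Su ?(leq_trans le_Ik) // sqr_normc mulrC.
have cs := schur_psd_cs Hk vk (block_trailing u0); rewrite vu in cs.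
have v_le : qform (S k) v v <= (specnorm A)%:C * V.
  by rewrite -vv; apply: le_trans (S_leA v vk) _; apply: psd_form_le_specnorm.
have u_le : qform (S k) u u <= (specnorm (invmx A))%:C * sqnorm (inb k) x.
  apply: le_trans (schur_form_le_block u0) _.
  rewrite -(sqnorm_blkcol_diag LU lt_k x) le_eqVlt; apply/orP; left.
  by apply/eqP; congr (_ * _); apply: eq_bigr => i bi; rewrite Su //; case/andP: bi.
have V0 : 0 <= V by apply: sqnorm_ge0.
rewrite rmorphM; apply: sqr_le_mulr_le; rewrite ?mulr_ge0 ?ler0c ?specnorm_ge0 ?sqnorm_ge0 //.
rewrite -[X in X ^+ 2](ger0_norm V0); apply: le_trans cs _.
apply: le_trans (ler_pM (S_psd v vk) (S_psd u (block_trailing u0)) v_le u_le) _.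
by rewrite le_eqVlt; apply/orP; left; apply/eqP; ring.
Qed.

End Block.

Lemma specnorm_L_psd : specnorm L <= (1 + Num.sqrt (kappa2 A)) * nt%:R.
Proof.
have k0 : 0 <= kappa2 A by rewrite mulr_ge0 ?specnorm_ge0.
apply: (specnorm_L_le blocking LU (sqrtr_ge0 _)) => k lt_k x.
by rewrite sqr_sqrtr //; apply: sqnorm_subcol_spd.
Qed.

End PositiveDefiniteBound.

Section SpdMatrices.
Variables (R : realType) (n : nat) (A : 'M[R[i]]_n).

Lemma qform_col (M : 'M[R[i]]_n) (x : 'cV[R[i]]_n) :
  (ctrmx x *m M *m x) 0 0 = qform M (fun i => x i 0) (fun i => x i 0).
Proof.
rewrite mxE /qform; under eq_bigr do rewrite mxE big_distrl /=.
by rewrite exchange_big /=; apply: eq_bigr => i _; apply: eq_bigr => j _; rewrite !mxE.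
Qed.

Lemma spd_qform_ge0 : spd A -> forall z, 0 <= qform A z z.
Proof.
move=> [_ A_pd] z; pose x : 'cV[R[i]]_n := \col_i z i.
have xz : (fun i => x i 0) = z by apply: funext => i; rewrite mxE.
have [x0|xn0] := eqVneq x 0; last by have := A_pd x xn0; rewrite qform_col xz => /ltW.
rewrite /qform big1 // => i _; rewrite big1 // => j _.
have : x j 0 = 0 by rewrite x0 mxE.
by rewrite mxE => ->; rewrite mulr0.
Qed.

Lemma spd_unitmx : spd A -> A \in unitmx.
Proof.
move=> [AT A_pd]; rewrite unitmxE unitfE; apply/negP => /det0P [v vn0 vA].
have Av : A *m v^T = 0 by rewrite -{1}AT -trmx_mul vA trmx0.
by have := A_pd v^T; rewrite trmx_eq0 => /(_ vn0); rewrite -mulmxA Av mulmx0 mxE ltxx.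
Qed.

End SpdMatrices.

Unset Implicit Arguments.

Theorem theorem2p8 (R : realType) (n nt : nat) (I : nat -> nat)
    (A L U : 'M[R[i]]_n) (S : nat -> 'M[R[i]]_n) :
  is_blocking n nt I ->
  block_LU nt I A L U S ->
  (A \in unitmx -> col_diag_dominant A ->
     specnorm L <= ((max_blksize nt I)%:R * Num.sqrt (max_blksize nt I)%:R + 1)
                   * nt%:R) /\
  (spd A ->
     specnorm L <= (Num.sqrt (kappa2 A) + 1) * nt%:R).
Proof.
move=> blocking LU; split=> [_ domA | spdA]; last first.
  rewrite addrC; apply: (specnorm_L_psd blocking LU).
  - exact: spd_qform_ge0.
  - exact: spd_unitmx.
apply: le_trans (specnorm_L_dominant blocking LU domA) _.
rewrite ler_wpM2r // addrC lerD2r.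
have [->|nb_gt0] := posnP (max_blksize nt I); first by rewrite mul0r sqrtr0.
by rewrite ler_peMl ?sqrtr_ge0 // ler1n.
Qed.
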